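(* Let $n\ge 3$. For the $n$-dimensional rigid body with a flat face rubber-rolling on a sphere (as in the context), the reduced equations of motion on $T^*\mathbb R^{n-1}$ possess an invariant measure of the form $\exp(\sigma(s))\,\nu$ with $\sigma\in C^\infty(\mathbb R^{n-1})$, and the system admits a Chaplygin Hamiltonisation, provided one of the following holds: (C1) $\mathbb J=\mathrm{diag}(J_1,J_2,\dots,J_n)$ and $a=0$; (C2) $\mathbb J=\mathrm{diag}(J_1,\dots,J_1,J_n)$.
   Context: Fix $n\ge3$, $R>0$, $a\in\mathbb R$, $m>0$, symmetric positive definite $n\times n$ matrix $\mathbb J$. Configuration space $Q=\mathbb R^{n-1}\times SO(n)\ni((X_1,\dots,X_{n-1}),g)$, $X=(X_1,\dots,X_{n-1},R+a)^T$, $\Omega=g^{-1}\dot g\in\mathfrak{so}(n)$, $E_1,\dots,E_n$ the standard basis of $\mathbb R^n$. Lagrangian $L=\frac12(\mathbb J\Omega+\Omega\mathbb J,\Omega)_\kappa+\frac m2\|\dot X+\Omega X\|^2$ with $(\xi,\eta)_\kappa=-\frac12\mathrm{tr}(\xi\eta)$, $\dot X_n=0$. Constraints: $\dot X=-R\Omega E_n$ and $\Omega_{\mu\nu}=0$ for $1\le\mu,\nu\le n-1$, defining a distribution $\mathcal D$. The action $h\cdot(X,g)=(X,hg)$ of $SO(n)$ makes this an $SO(n)$-Chaplygin system with shape space $S=\mathbb R^{n-1}$, coordinates $s_i=X_i$, $r=n-1$. Its reduced equations on $T^*S$ are $\dot s_i=\partial H/\partial p_i$, $\dot p_i=-\partial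 H/\partial s_i-\sum_{j,k}C_{ij}^kp_k\partial H/\partial p_j$, where $H=\frac12\sum K^{ij}p_ip_j$, $K_{ij}=\langle\mathrm{hor}_q\partial_{s_i},\mathrm{hor}_q\partial_{s_j}\rangle$ (horizontal lift into $\mathcal D_q$, metric given by $L$), $K^{ij}$ its inverse, and $C_{ij}^k=\sum_lK^{kl}\langle[\mathrm{hor}_q\partial_{s_i},\mathrm{hor}_q\partial_{s_j}],\mathrm{hor}_q\partial_{s_l}\rangle$. $\nu=ds_1\cdots ds_{n-1}dp_1\cdots dp_{n-1}$ is the Liouville volume. A Chaplygin Hamiltonisation is a smooth $\phi:S\to\mathbb R$ such that under $dt=e^{-\phi(s)}d\tau$, $p_i=e^{-\phi(s)}\tilde p_i$ the reduced equations become $ds_i/d\tau=\partial\tilde H/\partial\tilde p_i$, $d\tilde p_i/d\tau=-\partial\tilde H/\partial s_i$ with $\tilde H(s,\tilde p)=H(s,e^{-\phi(s)}\tilde p)$. *)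

From Stdlib Require Import Reals ClassicalEpsilon.
Open Scope R_scope.

(* Vectors of R^k are functions nat -> R (only indices < k matter);    *)
(* n x n matrices are functions nat -> nat -> R.  Index n-1 plays the  *)
(* role of E_n in the paper.                                           *)
Definition vec := nat -> R.
Definition mat := nat -> nat -> R.

Fixpoint rsum (k : nat) (f : nat -> R) : R :=
  match k with O => 0 | S k' => rsum k' f + f k' end.

Definition delta (i j : nat) : R := if Nat.eqb i j then 1 else 0.
Definition idm : mat := fun i j => delta i j.
Definition mmul (n : nat) (A B : mat) : mat :=
  fun i j => rsum n (fun l => A i l * B l j).
Definition madd (A B : mat) : mat := fun i j => A i j + B i j.
Definition mtr (A : mat) : mat := fun i j => A j i.
Definition trace (n : nat) (A : mat) : R := rsum n (fun i => A i i).
Definition mvec (n : nat) (A : mat) (v : vec) : vec :=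
  fun i => rsum n (fun j => A i j * v j).
Definition vadd (u v : vec) : vec := fun i => u i + v i.
Definition vscale (c : R) (v : vec) : vec := fun i => c * v i.
Definition dot (n : nat) (u v : vec) : R := rsum n (fun i => u i * v i).

Definition kappa (n : nat) (A B : mat) : R := - (1/2) * trace n (mmul n A B).

Definition sym_pd (n : nat) (J : mat) : Prop :=
  (forall i j, (i < n)%nat -> (j < n)%nat -> J i j = J j i) /\
  (forall v : vec, (exists i, (i < n)%nat /\ v i <> 0) ->
     0 < rsum n (fun i => rsum n (fun j => v i * J i j * v j))).

Definition is_diag (n : nat) (J : mat) : Prop :=
  forall i j, (i < n)%nat -> (j < n)%nat -> i <> j -> J i j = 0.

Definition Dr (f : R -> R) (x : R) : R :=
  epsilon (inhabits 0) (fun l => derivable_pt_lim f x l).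

Definition upd (x : vec) (i : nat) (t : R) : vec :=
  fun j => if Nat.eqb j i then t else x j.

Definition pd (i : nat) (f : vec -> R) (x : vec) : R :=
  Dr (fun t => f (upd x i (x i + t))) 0.

Definition has_pd (i : nat) (f : vec -> R) : Prop :=
  forall x, exists l, derivable_pt_lim (fun t => f (upd x i (x i + t))) 0 l.

Definition contk (k : nat) (f : vec -> R) : Prop :=
  forall x eps, 0 < eps -> exists del, 0 < del /\
    forall y, (forall i, (i < k)%nat -> Rabs (y i - x i) < del) ->
              (forall i, (k <= i)%nat -> y i = x i) ->
              Rabs (f y - f x) < eps.

Fixpoint Cm (k m : nat) (f : vec -> R) : Prop :=
  contk k f /\
  match m with
  | O => True
  | S m' => forall i, (i < k)%nat -> has_pd i f /\ Cm k m' (pd i f)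
  end.

Definition smooth (k : nat) (f : vec -> R) : Prop := forall m, Cm k m f.

Definition pds (i : nat) (F : vec -> vec -> R) (s p : vec) : R :=
  Dr (fun t => F (upd s i (s i + t)) p) 0.
Definition pdp (i : nat) (F : vec -> vec -> R) (s p : vec) : R :=
  Dr (fun t => F s (upd p i (p i + t))) 0.

(* Ambient space of Q = R^{n-1} x SO(n): ST = R^{n-1} x R^{n x n};     *)
(* a point q = (s, g), a tangent vector v = (Xdot, gdot).              *)
Definition ST := (vec * mat)%type.

Section Rubber.
Variables (n : nat) (J : mat) (m Rr a : R).

Definition r : nat := (n - 1)%nat.

Definition Xfull (s : vec) : vec :=
  fun i => if Nat.ltb i r then s i else if Nat.eqb i r then Rr + a else 0.
Definition Vfull (u : vec) : vec := fun i => if Nat.ltb i r then u i else 0.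

(* the kinetic-energy metric on T_q Q determined by L (so that <v,v> = 2L),
   with Omega = g^{-1} gdot = g^T gdot on SO(n) *)
Definition metric (q v w : ST) : R :=
  let g := snd q in
  let X := Xfull (fst q) in
  let O1 := mmul n (mtr g) (snd v) in
  let O2 := mmul n (mtr g) (snd w) in
  kappa n (madd (mmul n J O1) (mmul n O1 J)) O2
  + m * dot n (vadd (Vfull (fst v)) (mvec n O1 X))
              (vadd (Vfull (fst w)) (mvec n O2 X)).

Definition in_D (q v : ST) : Prop :=
  let Om := mmul n (mtr (snd q)) (snd v) in
  (forall i, (i < n)%nat -> Vfull (fst v) i = - Rr * Om i r) /\
  (forall i j, (i < r)%nat -> (j < r)%nat -> Om i j = 0).

(* Omega-part of the horizontal lift of d/ds_i: the unique element of so(n)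
   with Omega_{mu nu} = 0 (mu,nu<n) and -R Omega E_n = E_i, i.e.
   Omega = (1/R)(E_n E_i^T - E_i E_n^T). *)
Definition Omh (i : nat) : mat :=
  fun p q => / Rr * (delta p r * delta q i - delta p i * delta q r).

(* horizontal lift of d/ds_i, as a (left-invariant in g) vector field on the ambient space *)
Definition hor (i : nat) (q : ST) : ST :=
  (fun j => delta j i, mmul n (snd q) (Omh i)).

Definition shift (x : ST) (e : R) (v : ST) : ST :=
  (fun j => fst x j + e * fst v j, fun p q => snd x p q + e * snd v p q).

Definition bracket (V W : ST -> ST) (x : ST) : ST :=
  (fun j => Dr (fun e => fst (W (shift x e (V x))) j) 0
          - Dr (fun e => fst (V (shift x e (W x))) j) 0,
   fun p q => Dr (fun e => snd (W (shift x e (V x))) p q) 0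
            - Dr (fun e => snd (V (shift x e (W x))) p q) 0).

(* representative point of the fibre over s (everything is SO(n)-invariant) *)
Definition base (s : vec) : ST := (s, idm).

Definition Kmat (s : vec) : mat :=
  fun i j => metric (base s) (hor i (base s)) (hor j (base s)).

Definition is_inv (k : nat) (A M : mat) : Prop :=
  forall i j, (i < k)%nat -> (j < k)%nat -> rsum k (fun l => A i l * M l j) = delta i j.

Definition Kinv (s : vec) : mat :=
  epsilon (inhabits (fun _ _ => 0)) (fun M => is_inv r (Kmat s) M).

Definition Cijk (s : vec) (i j k : nat) : R :=
  rsum r (fun l => Kinv s k l *
    metric (base s) (bracket (hor i) (hor j) (base s)) (hor l (base s))).

Definition Ham (s p : vec) : R :=
  1/2 * rsum r (fun i => rsum r (fun j => Kinv s i j * p i * p j)).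

Definition sdot (s p : vec) (i : nat) : R := pdp i Ham s p.
Definition pdot (s p : vec) (i : nat) : R :=
  - pds i Ham s p
  - rsum r (fun j => rsum r (fun k => Cijk s i j k * p k * sdot s p j)).

(* exp(sigma(s)) nu is invariant: Liouville equation div(exp(sigma) Y) = 0 *)
Definition invariant_measure (sigma : vec -> R) : Prop :=
  forall s p : vec,
    rsum r (fun i =>
      pds i (fun s' p' => exp (sigma s') * sdot s' p' i) s p
    + pdp i (fun s' p' => exp (sigma s') * pdot s' p' i) s p) = 0.

(* Chaplygin Hamiltonisation: dt = exp(-phi) dtau, p = exp(-phi) pt turns the
   reduced equations into Hamilton's equations for Ht(s,pt) = H(s, exp(-phi) pt).
   ds/dtau = exp(-phi) sdot, dpt/dtau = (sum_j d_j phi sdot_j) p_i + pdot_i. *)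
Definition chaplygin_hamiltonisation (phi : vec -> R) : Prop :=
  smooth r phi /\
  let Ht := fun s' pt' => Ham s' (vscale (exp (- phi s')) pt') in
  forall s pt : vec,
    let p := vscale (exp (- phi s)) pt in
    (forall i, (i < r)%nat -> exp (- phi s) * sdot s p i = pdp i Ht s pt) /\
    (forall i, (i < r)%nat ->
       rsum r (fun j => pd j phi s * sdot s p j) * p i + pdot s p i
       = - pds i Ht s pt).

End Rubber.

(* At the identity of SO(n) the horizontal lifts give the kinetic matrix
   K = (D + m s s^T) / R^2 with D = diag(J_i + J_n + m a^2), inverted by the Sherman-Morrison
   formula, and the bracket of two lifts pairs with a third to m a / R^3 (d_il s_j - d_jl s_i),
   so that C_ij^l = m a / R^3 (K^li s_j - K^lj s_i).  Under (C1) these vanish and the reduced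
   system is Hamiltonian as it stands.  Under (C2) D is scalar, and with c0 = m a / (R D) the
   gyroscopic force sum_jl C_ij^l p_l sdot_j equals c0 ((s.sdot) p_i - s_i (p.sdot)): this is
   exactly what the time change with phi = c0 |s|^2 / 2 absorbs, while the divergence of the
   reduced vector field is -(r-1) c0 (s.sdot), compensated by the density
   exp((r-1) c0 |s|^2 / 2). *)

From Stdlib Require Import Reals Lra Lia FunctionalExtensionality ClassicalEpsilon.
Open Scope R_scope.

Lemma rsum_ext k f g : (forall i, (i < k)%nat -> f i = g i) -> rsum k f = rsum k g.
Proof.
  induction k as [|k IH]; intros H; simpl; [reflexivity|].
  rewrite IH, H; [reflexivity|lia|intros; apply H; lia].
Qed.

Lemma rsum_zero k : rsum k (fun _ => 0) = 0.
Proof. induction k as [|k IH]; simpl; [|rewrite IH]; ring. Qed.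

Lemma rsum_const k c : rsum k (fun _ => c) = INR k * c.
Proof. induction k as [|k IH]; simpl rsum; [simpl; ring|rewrite IH, S_INR; ring]. Qed.

Lemma rsum_plus k f g : rsum k (fun i => f i + g i) = rsum k f + rsum k g.
Proof. induction k as [|k IH]; simpl; [|rewrite IH]; ring. Qed.

Lemma rsum_minus k f g : rsum k (fun i => f i - g i) = rsum k f - rsum k g.
Proof. induction k as [|k IH]; simpl; [|rewrite IH]; ring. Qed.

Lemma rsum_mult_l k c f : rsum k (fun i => c * f i) = c * rsum k f.
Proof. induction k as [|k IH]; simpl; [|rewrite IH]; ring. Qed.

Lemma rsum_mult_r k c f : rsum k (fun i => f i * c) = rsum k f * c.
Proof. induction k as [|k IH]; simpl; [|rewrite IH]; ring. Qed.

Lemma rsum_swap a b (f : nat -> nat -> R) :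
  rsum a (fun i => rsum b (fun j => f i j)) = rsum b (fun j => rsum a (fun i => f i j)).
Proof.
  induction a as [|a IH]; simpl; [now rewrite rsum_zero|].
  now rewrite IH, <- rsum_plus.
Qed.

Lemma rsum_antisym k (f : nat -> nat -> R) :
  (forall i j, (i < k)%nat -> (j < k)%nat -> f i j = - f j i) ->
  rsum k (fun i => rsum k (fun j => f i j)) = 0.
Proof.
  intros Hf.
  assert (E : rsum k (fun i => rsum k (fun j => f i j))
              = - rsum k (fun i => rsum k (fun j => f i j))).
  { rewrite rsum_swap at 1.
    rewrite <- (Rmult_1_l (rsum k (fun i => rsum k (fun j => f i j)))),
      Ropp_mult_distr_l, <- rsum_mult_l.
    apply rsum_ext; intros j Hj. rewrite <- rsum_mult_l.
    apply rsum_ext; intros i Hi. rewrite Hf by assumption. ring. }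
  lra.
Qed.

Lemma rsum_le k f g : (forall i, (i < k)%nat -> f i <= g i) -> rsum k f <= rsum k g.
Proof.
  induction k as [|k IH]; intros H; simpl; [lra|].
  apply Rplus_le_compat; [apply IH; intros; apply H|apply H]; lia.
Qed.

Lemma rsum_nonneg k f : (forall i, (i < k)%nat -> 0 <= f i) -> 0 <= rsum k f.
Proof. intros H. rewrite <- (rsum_zero k). now apply rsum_le. Qed.

Lemma Rabs_rsum_le k f : Rabs (rsum k f) <= rsum k (fun i => Rabs (f i)).
Proof.
  induction k as [|k IH]; simpl; [rewrite Rabs_R0; lra|].
  eapply Rle_trans; [apply Rabs_triang|lra].
Qed.

Lemma delta_sym i j : delta i j = delta j i.
Proof. unfold delta. now rewrite Nat.eqb_sym. Qed.

Lemma delta_refl i : delta i i = 1.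
Proof. unfold delta. now rewrite Nat.eqb_refl. Qed.

Lemma delta_neq i j : i <> j -> delta i j = 0.
Proof. intros H. unfold delta. now destruct (Nat.eqb_spec i j). Qed.

Lemma rsum_delta k i f : (i < k)%nat -> rsum k (fun l => delta l i * f l) = f i.
Proof.
  induction k as [|k IH]; intros Hi; simpl; [lia|].
  destruct (Nat.eq_dec i k) as [->|Hne].
  - rewrite delta_refl, (rsum_ext _ _ (fun _ => 0)), rsum_zero; [ring|].
    intros l Hl. rewrite delta_neq by lia. ring.
  - rewrite IH, delta_neq by lia. ring.
Qed.

Lemma rsum_delta2 k i j A B : (i < k)%nat -> (j < k)%nat ->
  rsum k (fun l => delta l i * A l + delta l j * B l) = A i + B j.
Proof. intros. now rewrite rsum_plus, !rsum_delta. Qed.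

Lemma Dr_eq f x l : derivable_pt_lim f x l -> Dr f x = l.
Proof.
  intros H. apply (uniqueness_limite f x); [|exact H].
  unfold Dr. apply epsilon_spec. now exists l.
Qed.

Lemma Dr_spec f x : (exists l, derivable_pt_lim f x l) -> derivable_pt_lim f x (Dr f x).
Proof. intros [l H]. now rewrite (Dr_eq f x l H). Qed.

Lemma Dr_ext f g x : (forall t, f t = g t) -> Dr f x = Dr g x.
Proof. intros H. now replace g with f by (apply functional_extensionality; auto). Qed.

Lemma dlim_ext f g x d :
  (forall t, f t = g t) -> derivable_pt_lim f x d -> derivable_pt_lim g x d.
Proof. intros H. now replace g with f by (apply functional_extensionality; auto). Qed.

Lemma dlim_eq f x d d' : d = d' -> derivable_pt_lim f x d -> derivable_pt_lim f x d'.
Proof. now intros ->. Qed.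

Lemma dlim_const c x : derivable_pt_lim (fun _ => c) x 0.
Proof. apply derivable_pt_lim_const. Qed.

Lemma dlim_plus f g x a b : derivable_pt_lim f x a -> derivable_pt_lim g x b ->
  derivable_pt_lim (fun t => f t + g t) x (a + b).
Proof. apply derivable_pt_lim_plus. Qed.

Lemma dlim_minus f g x a b : derivable_pt_lim f x a -> derivable_pt_lim g x b ->
  derivable_pt_lim (fun t => f t - g t) x (a - b).
Proof. apply derivable_pt_lim_minus. Qed.

Lemma dlim_opp f x d : derivable_pt_lim f x d -> derivable_pt_lim (fun t => - f t) x (- d).
Proof. apply derivable_pt_lim_opp. Qed.

Lemma dlim_mult f g x a b : derivable_pt_lim f x a -> derivable_pt_lim g x b ->
  derivable_pt_lim (fun t => f t * g t) x (a * g x + f x * b).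
Proof. apply derivable_pt_lim_mult. Qed.

Lemma dlim_scal c f x d :
  derivable_pt_lim f x d -> derivable_pt_lim (fun t => c * f t) x (c * d).
Proof.
  intros H. eapply dlim_eq; [|apply (dlim_mult (fun _ => c) f); [apply dlim_const|exact H]].
  ring.
Qed.

Lemma dlim_div f g x a b : derivable_pt_lim f x a -> derivable_pt_lim g x b -> g x <> 0 ->
  derivable_pt_lim (fun t => f t / g t) x ((a * g x - b * f x) / (g x)²).
Proof. apply derivable_pt_lim_div. Qed.

Lemma dlim_exp f x d :
  derivable_pt_lim f x d -> derivable_pt_lim (fun t => exp (f t)) x (exp (f x) * d).
Proof. intros H. apply (derivable_pt_lim_comp f exp); [exact H|apply derivable_pt_lim_exp]. Qed.

Lemma dlim_affine c d x : derivable_pt_lim (fun t => c + t * d) x d.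
Proof.
  eapply dlim_eq; [|apply (dlim_plus (fun _ => c) (fun t => t * d));
    [apply dlim_const|apply (dlim_mult id (fun _ => d));
      [apply derivable_pt_lim_id|apply dlim_const]]].
  unfold id; ring.
Qed.

Lemma dlim_rsum k (f : nat -> R -> R) d x :
  (forall j, (j < k)%nat -> derivable_pt_lim (f j) x (d j)) ->
  derivable_pt_lim (fun t => rsum k (fun j => f j t)) x (rsum k d).
Proof.
  induction k as [|k IH]; intros H; simpl; [apply dlim_const|].
  apply dlim_plus; [apply IH; intros j Hj|]; apply H; lia.
Qed.

Local Notation shiftv x i t := (upd x i (x i + t))
  (only parsing, x in scope function_scope, i in scope nat_scope, t in scope R_scope).

Lemma upd_shift x i t j : upd x i (x i + t) j = x j + t * delta j i.
Proof. unfold upd, delta. destruct (Nat.eqb_spec j i); subst; ring. Qed.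

Lemma upd_shift_0 x i : upd x i (x i + 0) = x.
Proof. apply functional_extensionality; intros j. rewrite upd_shift. ring. Qed.

Lemma dlim_upd x i j : derivable_pt_lim (fun t => upd x i (x i + t) j) 0 (delta j i).
Proof.
  apply (dlim_ext (fun t => x j + t * delta j i)); [intros; now rewrite upd_shift|].
  apply dlim_affine.
Qed.

Lemma dlim_quad_form k (M : R -> nat -> nat -> R) (w : R -> vec) dM dw :
  (forall j l, (j < k)%nat -> (l < k)%nat -> derivable_pt_lim (fun t => M t j l) 0 (dM j l)) ->
  (forall j, (j < k)%nat -> derivable_pt_lim (fun t => w t j) 0 (dw j)) ->
  derivable_pt_lim (fun t => rsum k (fun j => rsum k (fun l => M t j l * w t j * w t l))) 0
   (rsum k (fun j => rsum k (fun l =>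
      dM j l * w 0 j * w 0 l + M 0 j l * dw j * w 0 l + M 0 j l * w 0 j * dw l))).
Proof.
  intros HM Hw. apply dlim_rsum; intros j Hj. apply dlim_rsum; intros l Hl.
  eapply dlim_eq; [|apply (dlim_mult (fun t => M t j l * w t j) (fun t => w t l));
    [apply (dlim_mult (fun t => M t j l) (fun t => w t j)); auto|auto]].
  ring.
Qed.

Lemma quad_form_polar k (M : nat -> nat -> R) u w :
  (forall j l, (j < k)%nat -> (l < k)%nat -> M j l = M l j) ->
  rsum k (fun j => rsum k (fun l => M j l * u j * w l + M j l * w j * u l))
  = 2 * rsum k (fun j => u j * rsum k (fun l => M j l * w l)).
Proof.
  intros HM.
  rewrite (rsum_ext k _ (fun j => rsum k (fun l => M j l * u j * w l)
                                 + rsum k (fun l => M j l * w j * u l)))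
    by (intros; apply rsum_plus).
  rewrite rsum_plus, (rsum_swap k k (fun j l => M j l * w j * u l)), <- rsum_plus,
    <- rsum_mult_l.
  apply rsum_ext; intros j Hj. rewrite <- rsum_plus, <- !rsum_mult_l.
  apply rsum_ext; intros l Hl. rewrite (HM l j) by assumption. ring.
Qed.

(** * Smoothness of quadratic polynomials *)

Definition quad_poly (k : nat) (al : R) (be : vec) (ga : R) (x : vec) : R :=
  al * dot k x x + dot k be x + ga.

Lemma quad_term_bound al be x y del : Rabs (y - x) < del -> del <= 1 ->
  Rabs (al * (y * y) + be * y - (al * (x * x) + be * x))
  <= del * (Rabs al * (2 * Rabs x + 1) + Rabs be).
Proof.
  intros Hyx Hdel.
  replace (al * (y * y) + be * y - (al * (x * x) + be * x))
    with (al * (y + x) * (y - x) + be * (y - x)) by ring.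
  assert (Hsum : Rabs (y + x) <= 2 * Rabs x + 1).
  { replace (y + x) with ((y - x) + 2 * x) by ring.
    eapply Rle_trans; [apply Rabs_triang|].
    rewrite Rabs_mult, (Rabs_right 2) by lra. lra. }
  pose proof (Rabs_pos al). pose proof (Rabs_pos be). pose proof (Rabs_pos (y - x)).
  pose proof (Rabs_pos (y + x)).
  eapply Rle_trans; [apply Rabs_triang|]. rewrite !Rabs_mult.
  assert (Rabs al * Rabs (y + x) * Rabs (y - x) <= Rabs al * (2 * Rabs x + 1) * del).
  { apply Rmult_le_compat; [apply Rmult_le_pos; lra|lra|
      apply Rmult_le_compat_l; lra|lra]. }
  assert (Rabs be * Rabs (y - x) <= Rabs be * del) by (apply Rmult_le_compat_l; lra).
  lra.
Qed.

Lemma quad_poly_cont k al be ga : contk k (quad_poly k al be ga).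
Proof.
  intros x eps Heps.
  set (M := rsum k (fun l => Rabs al * (2 * Rabs (x l) + 1) + Rabs (be l))).
  assert (HM : 0 <= M).
  { apply rsum_nonneg; intros l _.
    pose proof (Rabs_pos al). pose proof (Rabs_pos (be l)). pose proof (Rabs_pos (x l)).
    nra. }
  set (del := Rmin 1 (eps / (M + 1))).
  assert (Hdel_pos : 0 < del).
  { apply Rmin_glb_lt; [lra|apply Rdiv_lt_0_compat; lra]. }
  exists del. split; [exact Hdel_pos|]. intros y Hy _.
  replace (quad_poly k al be ga y - quad_poly k al be ga x)
    with (rsum k (fun l => al * (y l * y l) + be l * y l - (al * (x l * x l) + be l * x l)))
    by (unfold quad_poly, dot; rewrite rsum_minus, !rsum_plus, <- !rsum_mult_l; ring).
  eapply Rle_lt_trans; [apply Rabs_rsum_le|].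
  eapply Rle_lt_trans.
  { apply (rsum_le k _ (fun l => del * (Rabs al * (2 * Rabs (x l) + 1) + Rabs (be l)))).
    intros l Hl. apply quad_term_bound; [now apply Hy|apply Rmin_l]. }
  rewrite rsum_mult_l. fold M.
  assert (del * M <= eps / (M + 1) * M) by (apply Rmult_le_compat_r; [lra|apply Rmin_r]).
  assert (eps / (M + 1) * M < eps).
  { replace (eps / (M + 1) * M) with (eps - eps / (M + 1)) by (field; lra).
    assert (0 < eps / (M + 1)) by (apply Rdiv_lt_0_compat; lra). lra. }
  lra.
Qed.

Lemma quad_poly_dlim k al be ga x i : (i < k)%nat ->
  derivable_pt_lim (fun t => quad_poly k al be ga (shiftv x i t)) 0 (al * (2 * x i) + be i).
Proof.
  intros Hi. unfold quad_poly, dot.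
  eapply dlim_eq; [|apply dlim_plus; [apply dlim_plus; [apply dlim_scal|]|apply dlim_const]].
  - shelve.
  - apply dlim_rsum with (d := fun l => delta l i * (2 * x l)). intros l Hl.
    eapply dlim_eq; [|apply (dlim_mult (fun t => upd x i (x i + t) l)
                                        (fun t => upd x i (x i + t) l)); apply dlim_upd].
    rewrite upd_shift. ring.
  - apply dlim_rsum with (d := fun l => delta l i * be l). intros l Hl.
    eapply dlim_eq; [|apply (dlim_scal (be l) (fun t => upd x i (x i + t) l)), dlim_upd].
    ring.
  Unshelve. rewrite !rsum_delta by assumption. ring.
Qed.

Lemma pd_quad_poly k al be ga i : (i < k)%nat ->
  pd i (quad_poly k al be ga) = quad_poly k 0 (fun l => 2 * al * delta l i) (be i).
Proof.
  intros Hi. apply functional_extensionality; intros x. unfold pd.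
  rewrite (Dr_eq _ _ _ (quad_poly_dlim k al be ga x i Hi)). unfold quad_poly, dot.
  rewrite (rsum_ext k (fun l => 2 * al * delta l i * x l) (fun l => delta l i * (2 * al * x l)))
    by (intros; ring).
  rewrite rsum_delta by assumption. ring.
Qed.

Lemma quad_poly_smooth k al be ga : smooth k (quad_poly k al be ga).
Proof.
  intros N. revert al be ga. induction N as [|N IH]; intros al be ga; simpl.
  - split; [apply quad_poly_cont|exact I].
  - split; [apply quad_poly_cont|]. intros i Hi. split.
    + intros x. eexists. now apply quad_poly_dlim.
    + rewrite pd_quad_poly by assumption. apply IH.
Qed.

Lemma smooth_scaled_sq_norm k c : smooth k (fun x => c * dot k x x).
Proof.
  replace (fun x => c * dot k x x) with (quad_poly k c (fun _ => 0) 0)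
    by (apply functional_extensionality; intros x; unfold quad_poly, dot;
        rewrite (rsum_ext k (fun l => 0 * x l) (fun _ => 0)), rsum_zero by (intros; ring);
        ring).
  apply quad_poly_smooth.
Qed.

Lemma dlim_sq_norm k s i : (i < k)%nat ->
  derivable_pt_lim (fun t => dot k (shiftv s i t) (shiftv s i t)) 0 (2 * s i).
Proof.
  intros Hi. unfold dot.
  eapply dlim_eq; [|apply (dlim_rsum k (fun l t => upd s i (s i + t) l * upd s i (s i + t) l)
                                     (fun l => delta l i * (2 * s l)))].
  - now rewrite rsum_delta.
  - intros l Hl.
    eapply dlim_eq; [|apply (dlim_mult (fun t => upd s i (s i + t) l)
                                        (fun t => upd s i (s i + t) l)); apply dlim_upd].
    rewrite upd_shift. ring.
Qed.

Lemma pd_scaled_sq_norm k c s j : (j < k)%nat -> pd j (fun x => c * dot k x x) s = c * (2 * s j).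
Proof. intros Hj. apply Dr_eq, dlim_scal, dlim_sq_norm, Hj. Qed.

(** * Inverse of a diagonal matrix plus a rank-one matrix *)

Section RankOneUpdate.
Variables (k : nat) (D : nat -> R) (c : R) (s : vec).
Hypothesis HD : forall i, (i < k)%nat -> 0 < D i.
Hypothesis Hc : 0 <= c.

Definition rank_one_den : R := 1 + c * rsum k (fun l => s l * s l / D l).

Definition rank_one_inv (i j : nat) : R :=
  delta i j / D i - c * s i * s j / (D i * D j * rank_one_den).

Lemma rank_one_den_ge_1 : 1 <= rank_one_den.
Proof.
  assert (0 <= rsum k (fun l => s l * s l / D l)).
  { apply rsum_nonneg; intros l Hl. pose proof (HD l Hl).
    apply Rmult_le_pos; [nra|apply Rlt_le, Rinv_0_lt_compat; lra]. }
  unfold rank_one_den. nra.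
Qed.

Lemma rank_one_inv_sym i j : rank_one_inv i j = rank_one_inv j i.
Proof.
  unfold rank_one_inv. rewrite delta_sym.
  destruct (Nat.eq_dec i j) as [->|Hij]; [reflexivity|].
  rewrite delta_neq, (Rmult_comm (D j) (D i)) by auto. unfold Rdiv. ring.
Qed.

Lemma rank_one_mul_inv i j : (i < k)%nat -> (j < k)%nat ->
  rsum k (fun l => (D i * delta i l + c * s i * s l) * rank_one_inv l j) = delta i j.
Proof.
  intros Hi Hj. pose proof (HD i Hi). pose proof (HD j Hj). pose proof rank_one_den_ge_1.
  rewrite (rsum_ext k _ (fun l =>
      (delta l i * (D i * rank_one_inv l j) + delta l j * (c * s i * s l / D l))
      + (s l * s l / D l) * (- c * c * s i * s j / (D j * rank_one_den)))).
  - rewrite rsum_plus, rsum_delta2, rsum_mult_r by assumption.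
    unfold rank_one_inv, rank_one_den in *.
    set (S := rsum k (fun l => s l * s l / D l)) in *. field. lra.
  - intros l Hl. pose proof (HD l Hl). unfold rank_one_inv. rewrite (delta_sym i l).
    field. pose proof rank_one_den_ge_1. repeat split; lra.
Qed.

End RankOneUpdate.

Lemma is_inv_unique k A M B :
  is_inv k A M ->
  (forall i j, (i < k)%nat -> (j < k)%nat -> rsum k (fun l => B i l * A l j) = delta i j) ->
  forall i j, (i < k)%nat -> (j < k)%nat -> M i j = B i j.
Proof.
  intros HM HB i j Hi Hj.
  rewrite <- (rsum_delta k i (fun l => M l j)) by assumption.
  rewrite (rsum_ext k _ (fun l => rsum k (fun q => B i q * A q l * M l j)))
    by (intros l Hl; rewrite rsum_mult_r, HB, delta_sym by assumption; reflexivity).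
  rewrite rsum_swap, (rsum_ext k _ (fun q => delta q j * B i q)).
  - now apply rsum_delta.
  - intros q Hq. rewrite (rsum_ext k _ (fun l => B i q * (A q l * M l j))) by (intros; ring).
    rewrite rsum_mult_l, HM by assumption. ring.
Qed.

(** * Kinetic matrix and bracket of horizontal lifts *)

Section RubberBody.
Variables (n : nat) (J : mat) (m Rr a : R).
Hypothesis Hn : (1 < n)%nat.
Hypothesis HR : 0 < Rr.
Hypothesis Hdiag : is_diag n J.

Local Notation k := (r n).

Lemma r_lt_n : (k < n)%nat.
Proof. unfold r; lia. Qed.

Lemma lt_r_lt_n i : (i < k)%nat -> (i < n)%nat.
Proof. unfold r; lia. Qed.

Lemma lt_n_cases p : (p < n)%nat -> (p < k)%nat \/ p = k.
Proof. unfold r; lia. Qed.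

#[local] Hint Resolve r_lt_n lt_r_lt_n : core.

Lemma delta_lt_r i : (i < k)%nat -> delta i k = 0.
Proof. intros; apply delta_neq; lia. Qed.

Lemma delta_r_lt i : (i < k)%nat -> delta k i = 0.
Proof. intros; apply delta_neq; lia. Qed.

Lemma diag_entry_l p q : (p < n)%nat -> (q < n)%nat -> J p q = delta q p * J p p.
Proof.
  intros. destruct (Nat.eq_dec p q) as [->|Hpq]; [rewrite delta_refl; ring|].
  rewrite Hdiag, delta_neq by auto. ring.
Qed.

Lemma diag_entry_r p q : (p < n)%nat -> (q < n)%nat -> J p q = delta p q * J q q.
Proof.
  intros. destruct (Nat.eq_dec p q) as [->|Hpq]; [rewrite delta_refl; ring|].
  rewrite Hdiag, delta_neq by auto. ring.
Qed.

Lemma mmul_idm_l B p q : (p < n)%nat -> mmul n idm B p q = B p q.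
Proof.
  intros. unfold mmul, idm. rewrite <- (rsum_delta n p (fun l => B l q)) by assumption.
  apply rsum_ext; intros. now rewrite delta_sym.
Qed.

Lemma mmul_tr_idm_l B p q : (p < n)%nat -> mmul n (mtr idm) B p q = B p q.
Proof. intros. unfold mmul, mtr, idm. now apply (rsum_delta n p (fun l => B l q)). Qed.

Lemma kappa_diag O1 O2 : kappa n (madd (mmul n J O1) (mmul n O1 J)) O2 =
  - (1/2) * rsum n (fun p => rsum n (fun l => (J p p + J l l) * O1 p l * O2 l p)).
Proof.
  unfold kappa, trace, madd, mmul. f_equal.
  apply rsum_ext; intros p Hp. apply rsum_ext; intros l Hl.
  rewrite (rsum_ext n (fun q => J p q * O1 q l) (fun q => delta q p * (J p p * O1 q l)))
    by (intros q Hq; rewrite (diag_entry_l p q) by assumption; ring).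
  rewrite (rsum_ext n (fun q => O1 p q * J q l) (fun q => delta q l * (O1 p q * J l l)))
    by (intros q Hq; rewrite (diag_entry_r q l) by assumption; ring).
  rewrite !rsum_delta by assumption. ring.
Qed.

Lemma metric_base s u1 G1 H1 u2 G2 H2 :
  (forall p q, (p < n)%nat -> (q < n)%nat -> G1 p q = H1 p q) ->
  (forall p q, (p < n)%nat -> (q < n)%nat -> G2 p q = H2 p q) ->
  metric n J m Rr a (base s) (u1, G1) (u2, G2) =
  - (1/2) * rsum n (fun p => rsum n (fun l => (J p p + J l l) * H1 p l * H2 l p))
  + m * rsum n (fun p => (Vfull n u1 p + rsum n (fun q => H1 p q * Xfull n Rr a s q))
                      * (Vfull n u2 p + rsum n (fun q => H2 p q * Xfull n Rr a s q))).
Proof.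
  intros E1 E2. unfold metric, base; simpl. rewrite kappa_diag. f_equal; f_equal.
  - apply rsum_ext; intros p Hp. apply rsum_ext; intros l Hl.
    now rewrite !mmul_tr_idm_l, E1, E2.
  - unfold dot, vadd, mvec. apply rsum_ext; intros p Hp. f_equal; f_equal;
      apply rsum_ext; intros q Hq; now rewrite mmul_tr_idm_l, ?E1, ?E2.
Qed.

Lemma Xfull_lt s i : (i < k)%nat -> Xfull n Rr a s i = s i.
Proof. intros. unfold Xfull. destruct (Nat.ltb_spec i k); [reflexivity|lia]. Qed.

Lemma Xfull_r s : Xfull n Rr a s k = Rr + a.
Proof. unfold Xfull. destruct (Nat.ltb_spec k k); [lia|]. now rewrite Nat.eqb_refl. Qed.

Lemma Vfull_r u : Vfull n u k = 0.
Proof. unfold Vfull. destruct (Nat.ltb_spec k k); [lia|reflexivity]. Qed.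

Lemma Vfull_lt u p : (p < k)%nat -> Vfull n u p = u p.
Proof. intros. unfold Vfull. destruct (Nat.ltb_spec p k); [reflexivity|lia]. Qed.

Lemma Omh_Xfull s i p : (i < k)%nat ->
  rsum n (fun q => Omh n Rr i p q * Xfull n Rr a s q)
  = / Rr * (delta p k * s i - delta p i * (Rr + a)).
Proof.
  intros Hi. unfold Omh.
  rewrite (rsum_ext n _ (fun q => delta q i * (/ Rr * delta p k * Xfull n Rr a s q)
                               + delta q k * (- / Rr * delta p i * Xfull n Rr a s q)))
    by (intros; ring).
  rewrite rsum_delta2, Xfull_lt, Xfull_r by auto. ring.
Qed.

Lemma hor_velocity s i p : (i < k)%nat -> (p < n)%nat ->
  Vfull n (fun j => delta j i) p + rsum n (fun q => Omh n Rr i p q * Xfull n Rr a s q)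
  = - (a / Rr) * delta p i + (s i / Rr) * delta p k.
Proof.
  intros Hi Hp. rewrite Omh_Xfull by assumption.
  destruct (lt_n_cases p Hp) as [Hpk| ->].
  - rewrite Vfull_lt, (delta_lt_r p) by assumption. field; lra.
  - rewrite Vfull_r, (delta_r_lt i), delta_refl by assumption. field; lra.
Qed.

Definition Kdiag (i : nat) : R := J i i + J k k + m * a ^ 2.

Lemma Kmat_rank_one s i j : (i < k)%nat -> (j < k)%nat ->
  Kmat n J m Rr a s i j = (Kdiag i * delta i j + m * s i * s j) / Rr ^ 2.
Proof.
  intros Hi Hj. unfold Kmat, hor. simpl.
  rewrite (metric_base s _ _ (Omh n Rr i) _ _ (Omh n Rr j))
    by (intros; now rewrite mmul_idm_l).
  rewrite (rsum_ext n (fun p => (_ + _) * (_ + _)) (fun p =>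
      delta p i * (- (a / Rr) * (- (a / Rr) * delta p j + (s j / Rr) * delta p k))
    + delta p k * (s i / Rr * (- (a / Rr) * delta p j + (s j / Rr) * delta p k))))
    by (intros; rewrite !hor_velocity by auto; ring).
  rewrite rsum_delta2 by auto.
  rewrite (rsum_ext n (fun p => rsum n _) (fun p => rsum n (fun l =>
      delta l i * ((J p p + J l l) * / Rr * delta p k
                   * (/ Rr * (delta l k * delta p j - delta l j * delta p k)))
    + delta l k * (- (J p p + J l l) * / Rr * delta p i
                   * (/ Rr * (delta l k * delta p j - delta l j * delta p k))))))
    by (intros; apply rsum_ext; intros; unfold Omh; ring).
  rewrite (rsum_ext n (fun p => rsum n _) (fun p =>
      delta p k * (- (J p p + J i i) / Rr ^ 2 * delta i j * delta p k)
    + delta p i * (- (J p p + J k k) / Rr ^ 2 * delta p j))).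
  2: { intros p Hp. rewrite rsum_delta2, (delta_lt_r i), (delta_r_lt j), delta_refl by auto.
       field; lra. }
  rewrite rsum_delta2, !delta_refl, (delta_lt_r i), (delta_r_lt j) by auto.
  unfold Kdiag. field; lra.
Qed.

Lemma Omh_mmul i j p q : (i < k)%nat -> (j < k)%nat ->
  rsum n (fun l => Omh n Rr i p l * Omh n Rr j l q) =
  - / Rr ^ 2 * (delta i j * delta p k * delta q k + delta p i * delta q j).
Proof.
  intros. unfold Omh.
  rewrite (rsum_ext n _ (fun l =>
      delta l i * (/ Rr * delta p k * (/ Rr * (delta l k * delta q j - delta l j * delta q k)))
    + delta l k * (- / Rr * delta p i * (/ Rr * (delta l k * delta q j - delta l j * delta q k)))))
    by (intros; ring).
  rewrite rsum_delta2, (delta_lt_r i), (delta_r_lt j), delta_refl by auto. field; lra.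
Qed.

Definition Omh_bracket (i j : nat) : mat :=
  fun p q => - / Rr ^ 2 * (delta p i * delta q j - delta p j * delta q i).

Lemma bracket_hor_fst s i j : fst (bracket (hor n Rr i) (hor n Rr j) (base s)) = fun _ => 0.
Proof.
  apply functional_extensionality; intros q. simpl.
  rewrite !(Dr_eq _ _ 0) by apply dlim_const. ring.
Qed.

Lemma bracket_hor_snd s i j p q : (i < k)%nat -> (j < k)%nat -> (p < n)%nat ->
  snd (bracket (hor n Rr i) (hor n Rr j) (base s)) p q = Omh_bracket i j p q.
Proof.
  intros Hi Hj Hp. simpl. unfold mmul at 1 3.
  assert (Hlin : forall i' j', derivable_pt_lim (fun e => rsum n (fun l =>
        (idm p l + e * mmul n idm (Omh n Rr i') p l) * Omh n Rr j' l q)) 0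
      (rsum n (fun l => Omh n Rr i' p l * Omh n Rr j' l q))).
  { intros i' j'. apply dlim_rsum; intros l Hl. rewrite mmul_idm_l by assumption.
    apply (dlim_ext (fun e => idm p l * Omh n Rr j' l q
                              + e * (Omh n Rr i' p l * Omh n Rr j' l q)));
      [intros; ring|apply dlim_affine]. }
  rewrite (Dr_eq _ _ _ (Hlin i j)), (Dr_eq _ _ _ (Hlin j i)), !Omh_mmul by assumption.
  unfold Omh_bracket. rewrite (delta_sym j i). ring.
Qed.

(* The factor [a] is why all [C_ij^l] vanish in case (C1). *)
Lemma metric_bracket_hor s i j l : (i < k)%nat -> (j < k)%nat -> (l < k)%nat ->
  metric n J m Rr a (base s) (bracket (hor n Rr i) (hor n Rr j) (base s)) (hor n Rr l (base s))
  = m * a / Rr ^ 3 * (delta i l * s j - delta j l * s i).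
Proof.
  intros Hi Hj Hl.
  destruct (bracket (hor n Rr i) (hor n Rr j) (base s)) as [b1 b2] eqn:Eb.
  assert (Hb1 := bracket_hor_fst s i j). assert (Hb2 := bracket_hor_snd s i j).
  rewrite Eb in Hb1, Hb2; simpl in Hb1, Hb2; subst b1. unfold hor; simpl.
  rewrite (metric_base s _ _ (Omh_bracket i j) _ _ (Omh n Rr l))
    by (intros; auto using mmul_idm_l).
  rewrite (rsum_ext n (fun p => (_ + _) * (_ + _)) (fun p =>
      delta p i * (- / Rr ^ 2 * s j * (- (a / Rr) * delta p l + (s l / Rr) * delta p k))
    + delta p j * (/ Rr ^ 2 * s i * (- (a / Rr) * delta p l + (s l / Rr) * delta p k)))).
  2: { intros p Hp. rewrite hor_velocity by assumption.
       rewrite (rsum_ext n (fun q => Omh_bracket i j p q * _) (fun q =>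
           delta q j * (- / Rr ^ 2 * delta p i * Xfull n Rr a s q)
         + delta q i * (/ Rr ^ 2 * delta p j * Xfull n Rr a s q)))
         by (intros; unfold Omh_bracket; ring).
       rewrite rsum_delta2, !Xfull_lt by auto.
       replace (Vfull n (fun _ => 0) p) with 0 by (unfold Vfull; now destruct (Nat.ltb p k)).
       ring. }
  rewrite rsum_delta2 by auto.
  rewrite (rsum_ext n (fun p => rsum n _) (fun p => rsum n (fun q =>
      delta q j * ((J p p + J q q) * (- / Rr ^ 2) * delta p i * Omh n Rr l q p)
    + delta q i * ((J p p + J q q) * (/ Rr ^ 2) * delta p j * Omh n Rr l q p))))
    by (intros; apply rsum_ext; intros; unfold Omh_bracket; ring).
  rewrite (rsum_ext n (fun p => rsum n _) (fun p =>
      delta p i * ((J p p + J j j) * (- / Rr ^ 2) * (- / Rr * delta j l * delta p k))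
    + delta p j * ((J p p + J i i) * (/ Rr ^ 2) * (- / Rr * delta i l * delta p k))))
    by (intros; rewrite rsum_delta2 by auto; unfold Omh;
        rewrite (delta_lt_r i), (delta_lt_r j) by assumption; ring).
  rewrite rsum_delta2, (delta_lt_r i), (delta_lt_r j) by auto. field; lra.
Qed.

(** * The reduced equations in closed form *)

Hypothesis Hm : 0 < m.
Hypothesis Hpos : forall i, (i < n)%nat -> 0 < J i i.

Lemma Kdiag_pos i : (i < k)%nat -> 0 < Kdiag i.
Proof.
  intros Hi. unfold Kdiag. pose proof (Hpos i (lt_r_lt_n i Hi)). pose proof (Hpos k r_lt_n).
  assert (0 <= m * a ^ 2) by (apply Rmult_le_pos; [lra|apply pow2_ge_0]). lra.
Qed.

Local Notation rho := (rank_one_den k Kdiag m).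

Lemma rho_pos s : 0 < rho s.
Proof. pose proof (rank_one_den_ge_1 k Kdiag m s Kdiag_pos (Rlt_le _ _ Hm)). lra. Qed.

Definition Kinv_form (s : vec) (i j : nat) : R := Rr ^ 2 * rank_one_inv k Kdiag m s i j.

Lemma Kinv_form_sym s i j : Kinv_form s i j = Kinv_form s j i.
Proof. unfold Kinv_form. now rewrite rank_one_inv_sym. Qed.

Lemma Kmat_sym s i j : (i < k)%nat -> (j < k)%nat ->
  Kmat n J m Rr a s i j = Kmat n J m Rr a s j i.
Proof.
  intros. rewrite !Kmat_rank_one by assumption. rewrite delta_sym.
  destruct (Nat.eq_dec i j) as [->|]; [reflexivity|rewrite delta_neq by auto; f_equal; ring].
Qed.

Lemma Kmat_mul_Kinv_form s i j : (i < k)%nat -> (j < k)%nat ->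
  rsum k (fun l => Kmat n J m Rr a s i l * Kinv_form s l j) = delta i j.
Proof.
  intros Hi Hj. rewrite <- (rank_one_mul_inv k Kdiag m s Kdiag_pos (Rlt_le _ _ Hm) i j Hi Hj).
  apply rsum_ext; intros l Hl. rewrite Kmat_rank_one by assumption. unfold Kinv_form.
  field. lra.
Qed.

Lemma Kinv_form_mul_Kmat s i j : (i < k)%nat -> (j < k)%nat ->
  rsum k (fun l => Kinv_form s i l * Kmat n J m Rr a s l j) = delta i j.
Proof.
  intros. rewrite delta_sym, <- (Kmat_mul_Kinv_form s j i) by assumption.
  apply rsum_ext; intros. rewrite Kinv_form_sym, Kmat_sym by assumption. ring.
Qed.

Lemma Kinv_eq s i j : (i < k)%nat -> (j < k)%nat -> Kinv n J m Rr a s i j = Kinv_form s i j.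
Proof.
  apply is_inv_unique with (A := Kmat n J m Rr a s); [|exact (Kinv_form_mul_Kmat s)].
  unfold Kinv. apply epsilon_spec. exists (Kinv_form s). exact (Kmat_mul_Kinv_form s).
Qed.

Lemma dlim_rho s i : exists d, derivable_pt_lim (fun t => rho (shiftv s i t)) 0 d.
Proof.
  unfold rank_one_den. eexists.
  apply dlim_plus; [apply dlim_const|]. apply dlim_scal. apply dlim_rsum; intros l Hl.
  apply (dlim_div (fun t => upd s i (s i + t) l * upd s i (s i + t) l) (fun _ => Kdiag l));
    [apply dlim_mult; apply dlim_upd|apply dlim_const|pose proof (Kdiag_pos l Hl); lra].
Qed.

Definition dKinv (i : nat) (s : vec) (j l : nat) : R :=
  Dr (fun t => Kinv_form (shiftv s i t) j l) 0.

Lemma dlim_Kinv_form s i j l : (j < k)%nat -> (l < k)%nat ->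
  derivable_pt_lim (fun t => Kinv_form (shiftv s i t) j l) 0 (dKinv i s j l).
Proof.
  intros Hj Hl. apply Dr_spec. destruct (dlim_rho s i) as [drho Hrho].
  unfold Kinv_form, rank_one_inv. eexists.
  apply dlim_scal, (dlim_minus (fun _ => delta j l / Kdiag j)); [apply dlim_const|].
  apply (dlim_div (fun t => m * upd s i (s i + t) j * upd s i (s i + t) l)
                  (fun t => Kdiag j * Kdiag l * rho (upd s i (s i + t)))).
  - apply (dlim_mult (fun t => m * upd s i (s i + t) j)); [apply dlim_scal|]; apply dlim_upd.
  - apply dlim_scal, Hrho.
  - pose proof (Kdiag_pos j Hj). pose proof (Kdiag_pos l Hl). pose proof (rho_pos (shiftv s i 0)).
    apply Rgt_not_eq, Rmult_lt_0_compat; [apply Rmult_lt_0_compat|]; lra.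
Qed.

Lemma dKinv_sym i s j l : dKinv i s j l = dKinv i s l j.
Proof. unfold dKinv. apply Dr_ext. intros; apply Kinv_form_sym. Qed.

Definition ham (s p : vec) : R :=
  1/2 * rsum k (fun i => rsum k (fun j => Kinv_form s i j * p i * p j)).

Definition vel (s p : vec) (i : nat) : R := rsum k (fun l => Kinv_form s i l * p l).

Definition ham_ds (i : nat) (s p : vec) : R :=
  1/2 * rsum k (fun j => rsum k (fun l => dKinv i s j l * p j * p l)).

Definition curv (s : vec) (i j l : nat) : R :=
  m * a / Rr ^ 3 * (Kinv_form s l i * s j - Kinv_form s l j * s i).

Definition gyro (s p : vec) (i : nat) : R :=
  rsum k (fun j => rsum k (fun l => curv s i j l * p l * vel s p j)).

Lemma Ham_eq s p : Ham n J m Rr a s p = ham s p.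
Proof.
  unfold Ham, ham. f_equal. apply rsum_ext; intros. apply rsum_ext; intros.
  now rewrite Kinv_eq.
Qed.

Lemma Cijk_eq s i j l : (i < k)%nat -> (j < k)%nat -> (l < k)%nat ->
  Cijk n J m Rr a s i j l = curv s i j l.
Proof.
  intros. unfold Cijk, curv.
  rewrite (rsum_ext k _ (fun q => delta q i * (m * a / Rr ^ 3 * Kinv_form s l q * s j)
                               + delta q j * (- (m * a / Rr ^ 3) * Kinv_form s l q * s i))).
  - rewrite rsum_delta2 by assumption. ring.
  - intros q Hq. rewrite Kinv_eq, metric_bracket_hor, (delta_sym i q), (delta_sym j q)
      by assumption. ring.
Qed.

Lemma dlim_ham_p s p i c : (i < k)%nat ->
  derivable_pt_lim (fun t => ham s (fun j => c * upd p i (p i + t) j)) 0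
    (c * vel s (fun j => c * p j) i).
Proof.
  intros Hi. unfold ham.
  eapply dlim_eq; [|apply dlim_scal, (dlim_quad_form k (fun _ => Kinv_form s)
      (fun t j => c * upd p i (p i + t) j) (fun _ _ => 0) (fun j => c * delta j i));
      intros; [apply dlim_const|apply dlim_scal, dlim_upd]].
  rewrite upd_shift_0.
  rewrite (rsum_ext k _ (fun j => rsum k (fun l =>
      Kinv_form s j l * (c * delta j i) * (c * p l)
    + Kinv_form s j l * (c * p j) * (c * delta l i))))
    by (intros; apply rsum_ext; intros; ring).
  rewrite quad_form_polar by (intros; apply Kinv_form_sym).
  unfold vel.
  rewrite <- (rsum_delta k i (fun j => c * rsum k (fun l => Kinv_form s j l * (c * p l))))
    by assumption.
  rewrite <- Rmult_assoc. replace (1 / 2 * 2) with 1 by field. rewrite Rmult_1_l.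
  apply rsum_ext; intros; ring.
Qed.

Lemma sdot_eq s p i : (i < k)%nat -> sdot n J m Rr a s p i = vel s p i.
Proof.
  intros Hi. unfold sdot, pdp.
  rewrite (Dr_ext _ (fun t => ham s (fun j => 1 * upd p i (p i + t) j))).
  - apply Dr_eq. eapply dlim_eq; [|now apply dlim_ham_p].
    unfold vel. rewrite Rmult_1_l. apply rsum_ext; intros; ring.
  - intros t. rewrite Ham_eq. f_equal. apply functional_extensionality; intros; ring.
Qed.

Lemma pds_Ham s p i : (i < k)%nat -> pds i (Ham n J m Rr a) s p = ham_ds i s p.
Proof.
  intros Hi. unfold pds.
  rewrite (Dr_ext _ (fun t => ham (shiftv s i t) p)) by (intros; apply Ham_eq).
  apply Dr_eq. unfold ham, ham_ds. apply dlim_scal.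
  eapply dlim_eq; [|apply (dlim_quad_form k (fun t => Kinv_form (shiftv s i t)) (fun _ => p)
                             (dKinv i s) (fun _ => 0));
                    intros; [now apply dlim_Kinv_form|apply dlim_const]].
  apply rsum_ext; intros; apply rsum_ext; intros; ring.
Qed.

Lemma pdot_eq s p i : (i < k)%nat -> pdot n J m Rr a s p i = - ham_ds i s p - gyro s p i.
Proof.
  intros Hi. unfold pdot. rewrite pds_Ham by assumption. unfold gyro. f_equal.
  apply rsum_ext; intros j Hj; apply rsum_ext; intros l Hl.
  now rewrite Cijk_eq, sdot_eq.
Qed.

Lemma dlim_vel_s s p i j : (j < k)%nat ->
  derivable_pt_lim (fun t => vel (shiftv s i t) p j) 0 (rsum k (fun l => dKinv i s j l * p l)).
Proof.
  intros Hj. unfold vel. apply dlim_rsum; intros l Hl.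
  eapply dlim_eq; [|apply (dlim_mult (fun t => Kinv_form (shiftv s i t) j l) (fun _ => p l));
                    [now apply dlim_Kinv_form|apply dlim_const]].
  ring.
Qed.

Lemma dlim_vel_p s p i j : (i < k)%nat ->
  derivable_pt_lim (fun t => vel s (shiftv p i t) j) 0 (Kinv_form s j i).
Proof.
  intros Hi. unfold vel.
  eapply dlim_eq; [|apply (dlim_rsum k (fun l t => Kinv_form s j l * upd p i (p i + t) l)
                                     (fun l => delta l i * Kinv_form s j l))].
  - now apply rsum_delta.
  - intros l Hl. eapply dlim_eq; [|apply dlim_scal, dlim_upd]. ring.
Qed.

Lemma dlim_ham_ds_p s p i : (i < k)%nat ->
  derivable_pt_lim (fun t => ham_ds i s (shiftv p i t)) 0 (rsum k (fun l => dKinv i s i l * p l)).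
Proof.
  intros Hi. unfold ham_ds.
  eapply dlim_eq; [|apply dlim_scal, (dlim_quad_form k (fun _ => dKinv i s)
      (fun t => upd p i (p i + t)) (fun _ _ => 0) (fun j => delta j i));
      intros; [apply dlim_const|apply dlim_upd]].
  rewrite upd_shift_0.
  rewrite (rsum_ext k _ (fun j => rsum k (fun l =>
      dKinv i s j l * delta j i * p l + dKinv i s j l * p j * delta l i)))
    by (intros; apply rsum_ext; intros; ring).
  rewrite quad_form_polar by (intros; apply dKinv_sym).
  rewrite <- (rsum_delta k i (fun j => rsum k (fun l => dKinv i s j l * p l))) by assumption.
  rewrite <- Rmult_assoc. replace (1 / 2 * 2) with 1 by field. rewrite Rmult_1_l.
  apply rsum_ext; intros; ring.
Qed.

Lemma curv_contract s p i j :
  rsum k (fun l => curv s i j l * p l) = m * a / Rr ^ 3 * (vel s p i * s j - vel s p j * s i).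
Proof.
  unfold curv, vel. rewrite <- !rsum_mult_r, <- rsum_minus, <- rsum_mult_l.
  apply rsum_ext; intros l Hl. rewrite (Kinv_form_sym s l i), (Kinv_form_sym s l j). ring.
Qed.

Definition gyro_dp (s p : vec) (i : nat) : R :=
  rsum k (fun j => curv s i j i * vel s p j)
     + rsum k (fun j => m * a / Rr ^ 3 * (vel s p i * s j - vel s p j * s i) * Kinv_form s j i).

Lemma dlim_gyro_p s p i : (i < k)%nat ->
  derivable_pt_lim (fun t => gyro s (shiftv p i t) i) 0 (gyro_dp s p i).
Proof.
  intros Hi. unfold gyro, gyro_dp. rewrite <- rsum_plus. apply dlim_rsum; intros j Hj.
  eapply dlim_eq; [|apply (dlim_rsum k (fun l t =>
      curv s i j l * upd p i (p i + t) l * vel s (shiftv p i t) j)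
      (fun l => delta l i * (curv s i j l * vel s p j) + curv s i j l * p l * Kinv_form s j i))].
  - rewrite rsum_plus, rsum_delta, rsum_mult_r, curv_contract by assumption. reflexivity.
  - intros l Hl.
    eapply dlim_eq; [|apply (dlim_mult (fun t => curv s i j l * upd p i (p i + t) l));
                      [apply dlim_scal, dlim_upd|now apply dlim_vel_p]].
    cbv beta. rewrite upd_shift_0. ring.
Qed.

Lemma gyro_eq s p i : gyro s p i =
  m * a / Rr ^ 3 * (vel s p i * dot k s (vel s p) - s i * dot k (vel s p) (vel s p)).
Proof.
  unfold gyro, dot.
  rewrite (rsum_ext k _ (fun j => m * a / Rr ^ 3 *
             (vel s p i * (s j * vel s p j) - s i * (vel s p j * vel s p j)))).
  - now rewrite rsum_mult_l, rsum_minus, !rsum_mult_l.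
  - intros j Hj. rewrite rsum_mult_r, curv_contract. ring.
Qed.

Lemma Kmat_vel s p i : (i < k)%nat -> rsum k (fun l => Kmat n J m Rr a s i l * vel s p l) = p i.
Proof.
  intros Hi. unfold vel.
  rewrite (rsum_ext k _ (fun l => rsum k (fun q => Kmat n J m Rr a s i l * Kinv_form s l q * p q)))
    by (intros; rewrite <- rsum_mult_l; apply rsum_ext; intros; ring).
  rewrite rsum_swap, (rsum_ext k _ (fun q => delta q i * p q)).
  - now apply rsum_delta.
  - intros q Hq. rewrite rsum_mult_r, Kmat_mul_Kinv_form, delta_sym by assumption. ring.
Qed.

Lemma dlim_ham_conformal_s s pt i c : (i < k)%nat ->
  let E := exp (- (c * dot k s s)) in
  derivable_pt_lim (fun t => ham (shiftv s i t)
                                 (vscale (exp (- (c * dot k (shiftv s i t) (shiftv s i t)))) pt)) 0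
   (ham_ds i s (vscale E pt)
    + rsum k (fun j => - (c * (2 * s i)) * vscale E pt j * vel s (vscale E pt) j)).
Proof.
  intros Hi E. unfold ham, vscale.
  eapply dlim_eq; [|apply dlim_scal, (dlim_quad_form k (fun t => Kinv_form (shiftv s i t))
      (fun t j => exp (- (c * dot k (shiftv s i t) (shiftv s i t))) * pt j) (dKinv i s)
      (fun j => E * (- (c * (2 * s i))) * pt j))].
  3: { intros j Hj.
       eapply dlim_eq;
         [|apply (dlim_mult (fun t => exp (- (c * dot k (shiftv s i t) (shiftv s i t))))
                            (fun _ => pt j));
                         [apply dlim_exp, dlim_opp, dlim_scal, dlim_sq_norm, Hi|apply dlim_const]].
       cbv beta. rewrite upd_shift_0. fold E. ring. }
  2: { intros; now apply dlim_Kinv_form. }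
  rewrite upd_shift_0. fold E.
  rewrite (rsum_ext k _ (fun j => rsum k (fun l => dKinv i s j l * (E * pt j) * (E * pt l))
    + rsum k (fun l => Kinv_form s j l * (E * (- (c * (2 * s i))) * pt j) * (E * pt l)
                     + Kinv_form s j l * (E * pt j) * (E * (- (c * (2 * s i))) * pt l))))
    by (intros; rewrite <- rsum_plus; apply rsum_ext; intros; ring).
  rewrite rsum_plus, quad_form_polar by (intros; apply Kinv_form_sym).
  unfold ham_ds, vel. rewrite Rmult_plus_distr_l. f_equal.
  rewrite <- Rmult_assoc. replace (1 / 2 * 2) with 1 by field. rewrite Rmult_1_l.
  apply rsum_ext; intros; ring.
Qed.

Lemma div_gyro_eq s p :
  rsum k (gyro_dp s p)
  = m * a / Rr ^ 3 * (rsum k (fun i => Kinv_form s i i) * dot k s (vel s p)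
      - rsum k (fun j => rsum k (fun i => Kinv_form s i j * s i) * vel s p j)).
Proof.
  unfold gyro_dp.
  rewrite rsum_plus, (rsum_antisym k (fun i j => _ * _ * Kinv_form s j i)), Rplus_0_r
    by (intros; rewrite Kinv_form_sym; ring).
  rewrite (rsum_ext k _ (fun i => Kinv_form s i i * (m * a / Rr ^ 3 * dot k s (vel s p))
     - m * a / Rr ^ 3 * rsum k (fun j => Kinv_form s i j * s i * vel s p j))).
  - rewrite rsum_minus, rsum_mult_r, rsum_mult_l, (rsum_swap k k).
    rewrite (rsum_ext k (fun j => rsum k (fun i => _))
               (fun j => rsum k (fun i => Kinv_form s i j * s i) * vel s p j))
      by (intros; now rewrite rsum_mult_r).
    ring.
  - intros i Hi. unfold dot, curv.
    rewrite <- (rsum_mult_l k (m * a / Rr ^ 3) (fun j => s j * vel s p j)),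
      <- (rsum_mult_l k (Kinv_form s i i)), <- (rsum_mult_l k (m * a / Rr ^ 3)), <- rsum_minus.
    apply rsum_ext; intros; ring.
Qed.

Lemma Kdiag0_pos : 0 < Kdiag 0.
Proof. apply Kdiag_pos. unfold r; lia. Qed.

Section ConstantD.
Hypothesis HD : forall i, (i < k)%nat -> Kdiag i = Kdiag 0.

Local Notation D := (Kdiag 0).

Lemma Kinv_form_const s i j : (i < k)%nat -> (j < k)%nat ->
  Kinv_form s i j = Rr ^ 2 * (delta i j / D - m * s i * s j / (D * D * rho s)).
Proof. intros. unfold Kinv_form, rank_one_inv. now rewrite (HD i), (HD j). Qed.

Lemma trace_Kinv_form s :
  rsum k (fun i => Kinv_form s i i) = Rr ^ 2 * (INR k / D - m * dot k s s / (D * D * rho s)).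
Proof.
  pose proof Kdiag0_pos. pose proof (rho_pos s).
  rewrite (rsum_ext k _ (fun i => Rr ^ 2 / D + (s i * s i) * (- Rr ^ 2 * m / (D * D * rho s)))).
  - rewrite rsum_plus, rsum_const, rsum_mult_r. unfold dot. field. lra.
  - intros. rewrite Kinv_form_const, delta_refl by assumption. field. lra.
Qed.

Lemma Kinv_form_mul_s s j : (j < k)%nat ->
  rsum k (fun i => Kinv_form s i j * s i)
  = Rr ^ 2 * (1 / D - m * dot k s s / (D * D * rho s)) * s j.
Proof.
  intros Hj. pose proof Kdiag0_pos. pose proof (rho_pos s).
  rewrite (rsum_ext k _ (fun i => delta i j * (Rr ^ 2 / D * s i)
                                + (s i * s i) * (- Rr ^ 2 * m * s j / (D * D * rho s)))).
  - rewrite rsum_plus, rsum_delta, rsum_mult_r by assumption. unfold dot. field. lra.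
  - intros. rewrite Kinv_form_const by assumption. field. lra.
Qed.

Lemma momentum_const s p i : (i < k)%nat ->
  p i = (D * vel s p i + m * s i * dot k s (vel s p)) / Rr ^ 2.
Proof.
  intros Hi. rewrite <- (Kmat_vel s p i) by assumption.
  rewrite (rsum_ext k _ (fun l => delta l i * (D * vel s p l / Rr ^ 2)
                                + (s l * vel s p l) * (m * s i / Rr ^ 2))).
  - rewrite rsum_plus, rsum_delta, rsum_mult_r by assumption. unfold dot. field. lra.
  - intros l Hl. rewrite Kmat_rank_one, HD, delta_sym by assumption. field. lra.
Qed.

End ConstantD.

Hypothesis Hcase : a = 0 \/ (forall i, (i < k)%nat -> Kdiag i = Kdiag 0).

Definition c0 : R := m * a / (Rr * Kdiag 0).

(* For constant [D]: [tr K^-1 (s.v) - (K^-1 s).v = (k-1) R^2 / D (s.v)], whence the factor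
   [k-1] in the density. *)
Lemma div_gyro s p : rsum k (gyro_dp s p) = (INR k - 1) * c0 * dot k s (vel s p).
Proof.
  rewrite div_gyro_eq. unfold c0.
  destruct Hcase as [-> | HD].
  - unfold Rdiv. ring.
  - rewrite trace_Kinv_form by assumption.
    rewrite (rsum_ext k (fun j => rsum k (fun i => Kinv_form s i j * s i) * vel s p j)
      (fun j => Rr ^ 2 * (1 / Kdiag 0 - m * dot k s s / (Kdiag 0 * Kdiag 0 * rho s))
                * (s j * vel s p j)))
      by (intros j Hj; rewrite Kinv_form_mul_s by assumption; ring).
    rewrite rsum_mult_l. fold (dot k s (vel s p)).
    pose proof Kdiag0_pos. pose proof (rho_pos s). field. lra.
Qed.

Lemma gyro_conformal s p i : (i < k)%nat ->
  gyro s p i = c0 * (dot k s (vel s p) * p i - s i * dot k p (vel s p)).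
Proof.
  intros Hi. rewrite gyro_eq. unfold c0.
  destruct Hcase as [-> | HD].
  - unfold Rdiv. ring.
  - assert (Hpv : dot k p (vel s p) = Kdiag 0 / Rr ^ 2 * dot k (vel s p) (vel s p)
                                      + m * dot k s (vel s p) / Rr ^ 2 * dot k s (vel s p)).
    { unfold dot at 1.
      rewrite (rsum_ext k _ (fun j => Kdiag 0 / Rr ^ 2 * (vel s p j * vel s p j)
                                    + m * dot k s (vel s p) / Rr ^ 2 * (s j * vel s p j)))
        by (intros j Hj; rewrite (momentum_const HD s p j) by assumption; field; lra).
      now rewrite rsum_plus, !rsum_mult_l. }
    rewrite Hpv, (momentum_const HD s p i) by assumption.
    pose proof Kdiag0_pos. field. lra.
Qed.

(** * The invariant measure and the Hamiltonisation *)

Lemma invariant_measure_conformal :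
  invariant_measure n J m Rr a (fun s => (INR k - 1) * c0 / 2 * dot k s s).
Proof.
  intros s p. set (sg := (INR k - 1) * c0 / 2). set (E := exp (sg * dot k s s)).
  rewrite (rsum_ext k _ (fun i => E * (sg * (2 * s i) * vel s p i) - E * gyro_dp s p i)).
  { rewrite rsum_minus, !rsum_mult_l, div_gyro.
    unfold dot; rewrite (rsum_ext k _ (fun i => sg * 2 * (s i * vel s p i))) by (intros; ring).
    rewrite rsum_mult_l. unfold sg. field. }
  intros i Hi. unfold pds, pdp.
  rewrite (Dr_eq _ _ (E * (sg * (2 * s i)) * vel s p i
                      + E * rsum k (fun l => dKinv i s i l * p l))).
  rewrite (Dr_eq _ _ (E * (- rsum k (fun l => dKinv i s i l * p l) - gyro_dp s p i))).
  - ring.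
  - apply (dlim_ext (fun t => E * (- ham_ds i s (shiftv p i t) - gyro s (shiftv p i t) i)));
      [intros; now rewrite pdot_eq|].
    apply dlim_scal, dlim_minus; [apply dlim_opp, dlim_ham_ds_p|apply dlim_gyro_p]; exact Hi.
  - apply (dlim_ext (fun t => exp (sg * dot k (shiftv s i t) (shiftv s i t))
                              * vel (shiftv s i t) p i));
      [intros; now rewrite sdot_eq|].
    eapply dlim_eq; [|apply dlim_mult; [apply dlim_exp, dlim_scal, dlim_sq_norm|apply dlim_vel_s];
                      exact Hi].
    cbv beta. rewrite upd_shift_0. reflexivity.
Qed.

Lemma chaplygin_hamiltonisation_conformal :
  chaplygin_hamiltonisation n J m Rr a (fun s => c0 / 2 * dot k s s).
Proof.
  split; [apply smooth_scaled_sq_norm|]. cbv zeta. intros s pt.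
  set (E := exp (- (c0 / 2 * dot k s s))). set (p := vscale E pt).
  split; intros i Hi.
  - rewrite sdot_eq by assumption. unfold pdp.
    rewrite (Dr_ext _ (fun t => ham s (fun j => E * upd pt i (pt i + t) j)))
      by (intros; now rewrite Ham_eq).
    now rewrite (Dr_eq _ _ _ (dlim_ham_p s pt i E Hi)).
  - rewrite pdot_eq, gyro_conformal by assumption. unfold pds.
    rewrite (Dr_ext _ (fun t => ham (shiftv s i t)
        (vscale (exp (- (c0 / 2 * dot k (shiftv s i t) (shiftv s i t)))) pt)))
      by (intros; apply Ham_eq).
    rewrite (Dr_eq _ _ _ (dlim_ham_conformal_s s pt i (c0 / 2) Hi)). fold E p.
    rewrite (rsum_ext k (fun j => pd j (fun x => c0 / 2 * dot k x x) s * sdot n J m Rr a s p j)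
                        (fun j => c0 * (s j * vel s p j)))
      by (intros j Hj; rewrite pd_scaled_sq_norm, sdot_eq by assumption; field).
    rewrite (rsum_ext k (fun j => _ * p j * vel s p j) (fun j => - (c0 * s i) * (p j * vel s p j)))
      by (intros; field).
    rewrite !rsum_mult_l. unfold dot. ring.
Qed.

End RubberBody.

Lemma sym_pd_diag_pos n J i : sym_pd n J -> (i < n)%nat -> 0 < J i i.
Proof.
  intros [_ Hpd] Hi.
  assert (Hquad : rsum n (fun p => rsum n (fun q => delta p i * J p q * delta q i)) = J i i).
  { rewrite (rsum_ext n _ (fun p => delta p i * J p i)); [now rewrite rsum_delta|].
    intros p Hp. rewrite (rsum_ext n _ (fun q => delta q i * (delta p i * J p q)))
      by (intros; ring).
    now rewrite rsum_delta. }
  rewrite <- Hquad. apply Hpd. exists i. rewrite delta_refl. split; [assumption|lra].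
Qed.

Theorem mainTheorem6 (n : nat) (Rr a m : R) (J : mat) :
  (3 <= n)%nat -> 0 < Rr -> 0 < m -> sym_pd n J ->
  ((is_diag n J /\ a = 0) \/
   (is_diag n J /\ forall i, (i < n - 1)%nat -> J i i = J 0%nat 0%nat)) ->
  (exists sigma : vec -> R,
     smooth (r n) sigma /\ invariant_measure n J m Rr a sigma) /\
  (exists phi : vec -> R, chaplygin_hamiltonisation n J m Rr a phi).
Proof.
  intros Hn HR Hm HJ Hcase.
  assert (Hn1 : (1 < n)%nat) by lia.
  assert (Hdiag : is_diag n J) by (destruct Hcase as [[? _]|[? _]]; assumption).
  assert (Hpos : forall i, (i < n)%nat -> 0 < J i i) by (intros; now apply (sym_pd_diag_pos n)).
  assert (HD : a = 0 \/ (forall i, (i < r n)%nat -> Kdiag n J m a i = Kdiag n J m a 0)).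
  { destruct Hcase as [[_ Ha]|[_ Hiso]]; [now left|right].
    intros i Hi. unfold Kdiag. rewrite (Hiso i) by (unfold r in Hi; lia). reflexivity. }
  split; eexists.
  - split; [apply smooth_scaled_sq_norm|now apply invariant_measure_conformal].
  - now apply chaplygin_hamiltonisation_conformal.
Qed.
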